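(* Fix $m,n\in\mathbb N$. For $(m+1)$-tuples of $n\times n$ positive-definite symmetric matrices $A_0,\dots,A_m$ define \[\mathcal F_n(A_0,\dots,A_m)=\prod_{i=0}^m\det(A_i)^{\frac{m}{2(m+1)}}\det(M)^{-\frac12},\] where $M$ is the $nm\times nm$ block matrix whose $(i,j)$ block ($1\le i,j\le m$) is $A_0+A_i$ if $i=j$ and $A_0$ if $i\ne j$. Then $\sup\mathcal F_n=(m+1)^{-n/2}$, and the supremum is attained at $(A_0,\dots,A_m)$ if and only if $A_0=A_1=\cdots=A_m$. *)

From HB Require Import structures.
From mathcomp Require Import all_boot all_order all_algebra.
From mathcomp Require Import all_classical all_reals all_analysis.
Set Implicit Arguments. Unset Strict Implicit. Unset Printing Implicit Defensive.
Import Order.TTheory GRing.Theory Num.Theory.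
Local Open Scope ring_scope.

Definition posdef_sym (R : realType) (n : nat) (A : 'M[R]_n) : Prop :=
  A^T = A /\ forall v : 'rV[R]_n, v != 0 -> 0 < (v *m A *m v^T) ord0 ord0.

(* The nm x nm block matrix: block (i,j), 1 <= i,j <= m, is A_0 + A_i if
   i = j and A_0 otherwise.  Block index i : 'I_m stands for i+1. *)
Definition blockM (R : realType) (m n : nat) (A : 'I_m.+1 -> 'M[R]_n)
  : 'M[R]_(\sum_(i < m) n)%N :=
  @mxblock R m m (fun _ => n) (fun _ => n)
    (fun i j => if i == j then A ord0 + A (lift ord0 i) else A ord0).

Definition Fn (R : realType) (m n : nat) (A : 'I_m.+1 -> 'M[R]_n) : R :=
  (\prod_(i < m.+1) powR (\det (A i)) (m%:R / (2 * (m.+1)%:R)))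
  * powR (\det (blockM A)) (- (1 / 2)).

From HB Require Import structures.
From mathcomp Require Import all_boot all_order all_algebra.
From mathcomp Require Import all_classical all_reals all_analysis.
From mathcomp Require Import ring.
Set Implicit Arguments. Unset Strict Implicit. Unset Printing Implicit Defensive.
Import Order.TTheory GRing.Theory Num.Theory.
Local Open Scope ring_scope.

(* With [B i] the inverse of [A i], [M] is block diagonal plus a low-rank term,
   and Sylvester's determinant identity gives
   [det M = prod_i det (A i) * det (sum_i B i)].  Hence
   [F_n(A)^(2(m+1)) = (m+1)^(-n(m+1)) * r] with
   [r = (m+1)^(n(m+1)) prod_i det (B i) / det (sum_i B i)^(m+1)], and the theorem
   is the determinantal AM-GM inequality [r <= 1] for positive definite [B i],
   with equality exactly when all [B i] coincide. *)

Definition mxquad (R : comNzRingType) n (A : 'M[R]_n) (v : 'rV[R]_n) : R :=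
  (v *m A *m v^T) 0 0.

Section QuadraticForm.
Variables (R : comNzRingType) (n : nat).
Implicit Types (A B : 'M[R]_n) (u v : 'rV[R]_n).

Lemma mxquadD A B v : mxquad (A + B) v = mxquad A v + mxquad B v.
Proof. by rewrite /mxquad mulmxDr mulmxDl mxE. Qed.

Lemma mxquadN A v : mxquad (- A) v = - mxquad A v.
Proof. by rewrite /mxquad mulmxN mulNmx mxE. Qed.

Lemma mxquadZ a A v : mxquad (a *: A) v = a * mxquad A v.
Proof. by rewrite /mxquad -scalemxAr -scalemxAl mxE. Qed.

Lemma mxquad_sum k (B : 'I_k -> 'M[R]_n) v :
  mxquad (\sum_i B i) v = \sum_i mxquad (B i) v.
Proof.
elim/big_ind2: _ => [|x x' y y' <- <-|//]; last by rewrite mxquadD.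
by rewrite /mxquad mulmx0 mul0mx mxE.
Qed.

Lemma mxquad0 A : mxquad A 0 = 0.
Proof. by rewrite /mxquad trmx0 mulmx0 mxE. Qed.

Lemma mulmx_trE u v : v *m u^T = ((u *m v^T) 0 0)%:M.
Proof.
rewrite [LHS]mx11_scalar; congr (_%:M).
have -> : v *m u^T = (u *m v^T)^T by rewrite trmx_mul trmxK.
by rewrite mxE.
Qed.

Lemma eq_row_dot u v : (forall w : 'rV[R]_n, (u *m w^T) 0 0 = (v *m w^T) 0 0) -> u = v.
Proof.
move=> uv; apply/rowP => j; move: (uv (delta_mx 0 j)).
rewrite !mxE (bigD1 j) //= [in RHS](bigD1 j) //= !mxE !eqxx !mulr1.
by rewrite !big1 ?addr0 // => i /negbTE ij; rewrite !mxE ij andbF mulr0.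
Qed.

End QuadraticForm.

Definition posdef (R : realFieldType) n (A : 'M[R]_n) : Prop :=
  A^T = A /\ forall v : 'rV[R]_n, v != 0 -> 0 < mxquad A v.

Definition pivot (R : realFieldType) n (X : 'M[R]_(1 + n)) : R := ulsubmx X 0 0.
Definition pivot_row (R : realFieldType) n (X : 'M[R]_(1 + n)) : 'rV[R]_n :=
  ursubmx X.
Definition schur (R : realFieldType) n (X : 'M[R]_(1 + n)) : 'M[R]_n :=
  drsubmx X - (pivot X)^-1 *: ((pivot_row X)^T *m pivot_row X).

Section SchurComplement.
Variables (R : realFieldType) (n : nat).
Implicit Types (X Y : 'M[R]_(1 + n)) (v : 'rV[R]_n).

Lemma sym_blockE X : X^T = X ->
  X = block_mx (pivot X)%:M (pivot_row X) (pivot_row X)^T (drsubmx X).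
Proof.
move=> sX; rewrite -{1}(submxK X) /pivot /pivot_row -mx11_scalar.
by rewrite trmx_ursub sX.
Qed.

Lemma mxquad_row_mx X t v : X^T = X ->
  mxquad X (row_mx t%:M v) =
  pivot X * t ^+ 2 + 2 * t * (pivot_row X *m v^T) 0 0 + mxquad (drsubmx X) v.
Proof.
move=> sX; rewrite /mxquad {1}(sym_blockE sX) mul_row_block tr_row_mx mul_row_col.
rewrite tr_scalar_mx (mulmx_trE (pivot_row X) v) !mulmxDl.
set q := (pivot_row X *m v^T) 0 0; set w := v *m drsubmx X *m v^T.
rewrite -[t%:M *m _ *m v^T]mulmxA [pivot_row X *m v^T]mx11_scalar -/q.
rewrite !mul_scalar_mx !mul_mx_scalar !mxE /= !mulr1n; ring.
Qed.

Lemma mxquad_schur X v :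
  mxquad (schur X) v = mxquad (drsubmx X) v - (pivot_row X *m v^T) 0 0 ^+ 2 / pivot X.
Proof.
rewrite /schur mxquadD mxquadN mxquadZ; congr (_ - _).
rewrite /mxquad mulmxA (mulmx_trE (pivot_row X) v) mul_scalar_mx -scalemxAl mxE.
by rewrite mulrC expr2.
Qed.

Lemma mxquad_complete_square X t v : X^T = X -> pivot X != 0 ->
  mxquad X (row_mx t%:M v) =
  mxquad (schur X) v + pivot X * (t + (pivot_row X *m v^T) 0 0 / pivot X) ^+ 2.
Proof. by move=> sX p0; rewrite mxquad_row_mx // mxquad_schur; field. Qed.

Lemma row_mx_scalar_eq0 t v : (row_mx t%:M v == 0) = (t == 0) && (v == 0).
Proof.
rewrite row_mx_eq0; congr (_ && _); apply/eqP/eqP => [/matrixP/(_ 0 0)|->].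
  by rewrite !mxE /= mulr1n.
exact: raddf0.
Qed.

Lemma posdef_pivot_gt0 X : posdef X -> 0 < pivot X.
Proof.
case=> sX pX; have := pX (row_mx 1%:M 0).
rewrite row_mx_scalar_eq0 oner_eq0 mxquad_row_mx // mxquad0.
by rewrite trmx0 mulmx0 mxE expr1n !mulr1 mulr0 !addr0; apply.
Qed.

Lemma schur_sym X : X^T = X -> (schur X)^T = schur X.
Proof.
by move=> sX; rewrite /schur linearB /= linearZ /= trmx_mul trmxK trmx_drsub sX.
Qed.

Section Posdef.
Variable X : 'M[R]_(1 + n).
Hypothesis posX : posdef X.

Let p0 : pivot X != 0. Proof. by rewrite gt_eqF ?posdef_pivot_gt0. Qed.

Lemma mxquad_schur_le t v : mxquad (schur X) v <= mxquad X (row_mx t%:M v).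
Proof.
rewrite mxquad_complete_square ?posX.1 // lerDl.
by rewrite mulr_ge0 ?sqr_ge0 ?ltW ?posdef_pivot_gt0.
Qed.

Lemma mxquad_schur_min v :
  mxquad (schur X) v = mxquad X (row_mx (- ((pivot_row X *m v^T) 0 0 / pivot X))%:M v).
Proof. by rewrite mxquad_complete_square ?posX.1 // addNr expr0n mulr0 addr0. Qed.

Lemma posdef_schur : posdef (schur X).
Proof.
split=> [|v v0]; first by rewrite schur_sym ?posX.1.
rewrite mxquad_schur_min; apply: posX.2.
by rewrite row_mx_scalar_eq0 (negbTE v0) andbF.
Qed.

Lemma det_schur : \det X = pivot X * \det (schur X).
Proof.
have defX : X = block_mx 1%:M 0 ((pivot X)^-1 *: (pivot_row X)^T) 1%:M *m
              block_mx (pivot X)%:M (pivot_row X) 0 (schur X).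
  rewrite mulmx_block {1}(sym_blockE posX.1) !mul1mx !mul0mx !addr0.
  rewrite mul_mx_scalar scalerA mulfV // scale1r.
  by rewrite /schur -scalemxAl addrC subrK.
by rewrite {1}defX det_mulmx det_lblock det_ublock !det1 det_scalar1 !mul1r.
Qed.

End Posdef.

Lemma eq_sym_schur X Y : X^T = X -> Y^T = Y -> pivot X = pivot Y ->
  pivot_row X = pivot_row Y -> schur X = schur Y -> X = Y.
Proof.
move=> sX sY eqp eqr eqS; rewrite (sym_blockE sX) (sym_blockE sY) eqp eqr.
have drsubE (Z : 'M[R]_(1 + n)) : drsubmx Z =
    schur Z + (pivot Z)^-1 *: ((pivot_row Z)^T *m pivot_row Z).
  by rewrite subrK.
by rewrite (drsubE X) (drsubE Y) eqS eqp eqr.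
Qed.

End SchurComplement.

Lemma det_posdef_gt0 (R : realFieldType) n (A : 'M[R]_n) : posdef A -> 0 < \det A.
Proof.
elim: n A => [|n IH] A posA; first by rewrite det_mx00.
have posA' : posdef (A : 'M[R]_(1 + n)) := posA.
rewrite (det_schur posA') mulr_gt0 ?posdef_pivot_gt0 //.
exact/IH/posdef_schur.
Qed.

Lemma eq_factors_of_ler_pM (R : numDomainType) (a a' d d' : R) :
  0 < a -> a <= a' -> 0 < d -> d <= d' -> a * d = a' * d' -> a = a' /\ d = d'.
Proof.
move=> a0 aa' d0 dd' e.
have d'0 : 0 < d' := lt_le_trans d0 dd'.
have e1 : a * d = a * d'.
  by apply/eqP; rewrite eq_le ler_pM2l // e ler_pM2r // dd' aa'.
have e2 : d = d' by apply: (mulfI (lt0r_neq0 a0)).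
by split=> //; apply: (mulIf (lt0r_neq0 d'0)); rewrite -e e2.
Qed.

Lemma det_loewner_mono (R : realFieldType) n (X Y : 'M[R]_n) :
  posdef X -> posdef Y -> (forall v, mxquad Y v <= mxquad X v) ->
  \det Y <= \det X /\ (\det Y = \det X -> Y = X).
Proof.
elim: n X Y => [|n IH] X Y posX posY YleX.
  by rewrite !det_mx00; split=> // _; apply/matrixP => -[].
have posX' : posdef (X : 'M[R]_(1 + n)) := posX.
have posY' : posdef (Y : 'M[R]_(1 + n)) := posY.
have pY := posdef_pivot_gt0 posY'.
have pYleX : pivot (Y : 'M[R]_(1 + n)) <= pivot (X : 'M[R]_(1 + n)).
  by have := YleX (row_mx 1%:M 0); rewrite !mxquad_row_mx ?posX'.1 ?posY'.1 //
    !mxquad0 trmx0 !mulmx0 mxE expr1n !mulr1 !mulr0 !addr0.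
have SYleX v : mxquad (schur (Y : 'M[R]_(1 + n))) v <= mxquad (schur X) v.
  by rewrite (mxquad_schur_min posX' v); apply: le_trans (YleX _); apply: mxquad_schur_le.
have [detSle detSeq] := IH _ _ (posdef_schur posX') (posdef_schur posY') SYleX.
have dSY := det_posdef_gt0 (posdef_schur posY').
rewrite (det_schur posX') (det_schur posY').
split=> [|/(eq_factors_of_ler_pM pY pYleX dSY detSle) [eqp /detSeq eqS]].
  exact: ler_pM (ltW pY) (ltW dSY) pYleX detSle.
apply: (eq_sym_schur posY'.1 posX'.1 eqp _ eqS); apply: eq_row_dot => v.
set a := pivot (X : 'M[R]_(1 + n)).
set qX := (pivot_row (X : 'M[R]_(1 + n)) *m v^T) 0 0.
set qY := (pivot_row (Y : 'M[R]_(1 + n)) *m v^T) 0 0.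
have := YleX (row_mx (- (qX / a))%:M v).
rewrite -(mxquad_schur_min posX' v) mxquad_complete_square ?posY'.1 ?gt_eqF //.
rewrite eqS eqp -/a -/qY gerDl => sq_le0.
have : (- (qX / a) + qY / a) ^+ 2 == 0.
  by rewrite eq_le sqr_ge0 andbT -(pmulr_rle0 _ (posdef_pivot_gt0 posX')).
rewrite sqrf_eq0 addrC subr_eq0 => /eqP.
by move/(mulIf (invr_neq0 (lt0r_neq0 (posdef_pivot_gt0 posX')))).
Qed.

Lemma AGM_ord (R : realFieldType) k (E : 'I_k.+1 -> R) : (forall i, 0 < E i) ->
  (k.+1)%:R ^+ k.+1 * \prod_i E i <= (\sum_i E i) ^+ k.+1 /\
  ((k.+1)%:R ^+ k.+1 * \prod_i E i = (\sum_i E i) ^+ k.+1 -> forall i, E i = E ord0).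
Proof.
move=> E0; have [] := @leif_AGM_scaled R _ predT E (fun i _ => mulrn_wge0 _ (ltW (E0 i))).
rewrite card_ord prodrMn_const card_ord -mulr_natl natrX => -> eqE; split=> // e.
move: eqE; rewrite e eqxx => /esym/forallP allE i.
by have /forallP/(_ ord0)/eqP := allE i.
Qed.

Lemma posdef_sum (R : realFieldType) n k (B : 'I_k.+1 -> 'M[R]_n) :
  (forall i, posdef (B i)) -> posdef (\sum_i B i).
Proof.
move=> posB; split.
  apply/matrixP => r c; rewrite mxE !summxE; apply: eq_bigr => i _.
  by rewrite -[in RHS](posB i).1 mxE.
move=> v v0; rewrite mxquad_sum big_ord_recl.
apply: (lt_le_trans ((posB ord0).2 v v0)); rewrite lerDl sumr_ge0 // => i _.
exact: ltW ((posB _).2 v v0).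
Qed.

Section SumOfPosdef.
Variables (R : realFieldType) (n k : nat) (B : 'I_k.+1 -> 'M[R]_(1 + n)).
Hypothesis posB : forall i, posdef (B i).
Let T := \sum_i B i.
Let posT : posdef T := posdef_sum posB.

Lemma pivot_sum : pivot T = \sum_i pivot (B i).
Proof. by rewrite /pivot /T !mxE summxE; apply: eq_bigr => i _; rewrite !mxE. Qed.

Lemma det_sum_schur : \det T = (\sum_i pivot (B i)) * \det (schur T).
Proof. by rewrite (det_schur posT) pivot_sum. Qed.

Lemma prod_det_schur :
  \prod_i \det (B i) = \prod_i pivot (B i) * \prod_i \det (schur (B i)).
Proof. by rewrite -big_split; apply: eq_bigr => i _; rewrite det_schur. Qed.

Lemma mxquad_sum_schur_le v :
  mxquad (\sum_i schur (B i)) v <= mxquad (schur T) v.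
Proof.
rewrite (mxquad_schur_min posT v) !mxquad_sum.
by apply: ler_sum => i _; apply: mxquad_schur_le.
Qed.

Lemma det_sum_schur_le :
  \det (\sum_i schur (B i)) <= \det (schur T) /\
  (\det (\sum_i schur (B i)) = \det (schur T) -> \sum_i schur (B i) = schur T).
Proof.
apply: det_loewner_mono (posdef_schur posT) _ mxquad_sum_schur_le.
by apply: posdef_sum => i; apply: posdef_schur.
Qed.

(* Equality forces every [B i] to be minimised, in its first coordinate, at the
   same point as [T], which pins down the ratio of pivot row to pivot. *)
Lemma pivot_row_sum_schur_eq : \sum_i schur (B i) = schur T ->
  forall i, pivot_row (B i) = (pivot (B i) / pivot T) *: pivot_row T.
Proof.
move=> eqS i; apply: eq_row_dot => v; rewrite -scalemxAl [RHS]mxE.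
set t := - ((pivot_row T *m v^T) 0 0 / pivot T).
have gap_ge0 j : 0 <= mxquad (B j) (row_mx t%:M v) - mxquad (schur (B j)) v.
  by rewrite subr_ge0 mxquad_schur_le.
have /psumr_eq0P gap_eq0 :
    \sum_j (mxquad (B j) (row_mx t%:M v) - mxquad (schur (B j)) v) = 0.
  by rewrite sumrB -!mxquad_sum eqS (mxquad_schur_min posT v) subrr.
have pBi_neq0 : pivot (B i) != 0 by rewrite gt_eqF ?posdef_pivot_gt0.
have /eqP := gap_eq0 (fun j _ => gap_ge0 j) i isT.
rewrite mxquad_complete_square ?(posB i).1 // addrC addKr.
rewrite mulf_eq0 (negbTE pBi_neq0) /= sqrf_eq0 addr_eq0 => /eqP /oppr_inj ratio.
by rewrite -(divfK pBi_neq0 (_ 0 0)) -ratio; ring.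
Qed.

End SumOfPosdef.

(* Induction on [n], peeling off the first pivot: the pivots obey scalar AM-GM,
   the Schur complements obey the induction hypothesis, and the Schur complement
   of a sum dominates the sum of the Schur complements. *)
Lemma posdef_det_AGM (R : realFieldType) n k (B : 'I_k.+1 -> 'M[R]_n) :
  (forall i, posdef (B i)) ->
  (k.+1)%:R ^+ (n * k.+1) * \prod_i \det (B i) <= \det (\sum_i B i) ^+ k.+1 /\
  ((k.+1)%:R ^+ (n * k.+1) * \prod_i \det (B i) = \det (\sum_i B i) ^+ k.+1 ->
   forall i, B i = B ord0).
Proof.
elim: n B => [|n IH] B posB.
  rewrite det_mx00 expr1n mul0n expr0 mul1r big1 => [|i _]; last exact: det_mx00.
  by split=> // _ i; apply/matrixP => -[].
pose B' i : 'M[R]_(1 + n) := B i; have posB' i : posdef (B' i) := posB i.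
pose T := \sum_i B' i; have posT : posdef T := posdef_sum posB'.
pose S i := schur (B' i); have posS i : posdef (S i) := posdef_schur (posB' i).
have [SleT SeqT] := det_sum_schur_le posB'.
have [IHle IHeq] := IH S posS.
have [AGMle AGMeq] := AGM_ord (fun i => posdef_pivot_gt0 (posB' i)).
set K : R := (k.+1)%:R; have K0 : 0 < K by rewrite ltr0n.
have lhsE : K ^+ (n.+1 * k.+1) * \prod_i \det (B i) =
    (K ^+ k.+1 * \prod_i pivot (B' i)) * (K ^+ (n * k.+1) * \prod_i \det (S i)).
  by rewrite mulSn exprD (prod_det_schur posB'); ring.
have rhsE : \det (\sum_i B i) ^+ k.+1 =
    (\sum_i pivot (B' i)) ^+ k.+1 * \det (schur T) ^+ k.+1.
  by rewrite (det_sum_schur posB') exprMn.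
have pivot_gt0 : 0 < K ^+ k.+1 * \prod_i pivot (B' i).
  by rewrite mulr_gt0 ?exprn_gt0 // prodr_gt0 // => i _; apply: posdef_pivot_gt0.
have schur_gt0 : 0 < K ^+ (n * k.+1) * \prod_i \det (S i).
  by rewrite mulr_gt0 ?exprn_gt0 // prodr_gt0 // => i _; apply: det_posdef_gt0.
have dS0 : 0 < \det (\sum_i S i) := det_posdef_gt0 (posdef_sum posS).
have dT0 : 0 < \det (schur T) := det_posdef_gt0 (posdef_schur posT).
have SleTX : \det (\sum_i S i) ^+ k.+1 <= \det (schur T) ^+ k.+1.
  by rewrite lerXn2r ?nnegrE ?(ltW dS0) ?(ltW dT0).
rewrite lhsE rhsE; split.
  exact: ler_pM (ltW pivot_gt0) (ltW schur_gt0) AGMle (le_trans IHle SleTX).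
move=> /(eq_factors_of_ler_pM pivot_gt0 AGMle schur_gt0 (le_trans IHle SleTX)).
move=> [/AGMeq eq_pivot eq_schur].
have eq_IH : K ^+ (n * k.+1) * \prod_i \det (S i) = \det (\sum_i S i) ^+ k.+1.
  by apply/eqP; rewrite eq_le IHle eq_schur SleTX.
have eq_sum_schur : \sum_i S i = schur T.
  apply: SeqT; apply/eqP; rewrite -(eqrXn2 (n := k.+1)) ?(ltW dS0) ?(ltW dT0) //.
  by rewrite -eq_IH eq_schur.
have eq_row := pivot_row_sum_schur_eq posB' eq_sum_schur.
move=> i; apply: (eq_sym_schur (posB' i).1 (posB' ord0).1 (eq_pivot i) _ (IHeq eq_IH i)).
by rewrite !eq_row eq_pivot.
Qed.

Lemma posdef1 (R : realFieldType) n : posdef (1%:M : 'M[R]_n).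
Proof.
split=> [|v v0]; first by rewrite trmx1.
have sq_ge0 j : 0 <= v 0 j * v^T j 0 by rewrite mxE -expr2 sqr_ge0.
rewrite /mxquad mulmx1 mxE lt_def sumr_ge0 ?andbT => [|j _]; last exact: sq_ge0.
apply: contra v0 => /eqP/(psumr_eq0P (fun j _ => sq_ge0 j)) sq0.
apply/eqP/rowP => j; have /eqP := sq0 j isT.
by rewrite mxE -expr2 sqrf_eq0 mxE => /eqP.
Qed.

Lemma posdef_unitmx (R : realFieldType) n (A : 'M[R]_n) : posdef A -> A \in unitmx.
Proof. by move=> posA; rewrite unitmxE unitfE gt_eqF ?det_posdef_gt0. Qed.

Lemma posdef_inv (R : realFieldType) n (A : 'M[R]_n) : posdef A -> posdef (invmx A).
Proof.
move=> posA; have uA := posdef_unitmx posA.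
case: posA => sA pA; split=> [|v v0]; first by rewrite trmx_inv sA.
have -> : mxquad (invmx A) v = mxquad A (v *m invmx A).
  by rewrite /mxquad trmx_mul trmx_inv sA !mulmxA mulmxKV.
apply: pA; apply: contra v0 => /eqP vA0.
by rewrite -[v](mulmxKV uA) vA0 mul0mx.
Qed.

Lemma det_castmx (R : comNzRingType) n n' (e : n = n') (A : 'M[R]_n) :
  \det (castmx (e, e) A) = \det A.
Proof. by case: n' / e; rewrite castmx_id. Qed.

Lemma det_mxdiag (R : comNzRingType) n m (A : 'I_m -> 'M[R]_n) :
  \det (@mxdiag R m (fun _ => n) A) = \prod_i \det (A i).
Proof.
elim: m A => [|m IH] A.
  by move: (mxdiag _); rewrite !big_ord0 => M; rewrite det_mx00.
by rewrite (@mxdiag_recl _ m (fun _ => n) A) det_castmx det_ublock IH big_ord_recl.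
Qed.

Lemma sylvester_det (R : comNzRingType) k l (X : 'M[R]_(k, l)) (Y : 'M[R]_(l, k)) :
  \det (1%:M + X *m Y) = \det (1%:M + Y *m X).
Proof.
have factor1 : block_mx 1%:M (- X) Y 1%:M =
    block_mx 1%:M 0 Y 1%:M *m block_mx 1%:M (- X) 0 (1%:M + Y *m X).
  by rewrite mulmx_block !mul1mx !mul0mx !mulmx1 !addr0 mulmxN addrC addrK.
have factor2 : block_mx 1%:M (- X) Y 1%:M =
    block_mx (1%:M + X *m Y) (- X) 0 1%:M *m block_mx 1%:M 0 Y 1%:M.
  by rewrite mulmx_block !mulmx1 !mul0mx !mul1mx !mulmx0 !add0r mulNmx addrK.
have := congr1 determinant factor1; rewrite factor2 !det_mulmx.
by rewrite !det_lblock !det_ublock !det1 !mul1r !mulr1 => ->.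
Qed.

Section BlockMatrix.
Variables (R : realType) (m n : nat) (A : 'I_m.+1 -> 'M[R]_n).

Let ones := @mxcol R m (fun _ => n) n (fun _ => 1%:M).

Lemma blockME :
  blockM A = @mxdiag R m (fun _ => n) (fun i => A (lift ord0 i)) +
             ones *m A ord0 *m ones^T.
Proof.
rewrite tr_mxcol mxcol_mul mul_mxcol_mxrow /mxdiag -mxblockD /blockM.
apply: eq_mxblock => i j; rewrite !mul1mx trmx1 mulmx1.
by case: (i == j); rewrite ?conform_mx_id ?add0r // addrC.
Qed.

Lemma det_blockM : (forall i, A i \in unitmx) ->
  \det (blockM A) = \prod_i \det (A i) * \det (\sum_i invmx (A i)).
Proof.
move=> uA.
pose D := @mxdiag R m (fun _ => n) (fun i => A (lift ord0 i)).
pose W := @mxcol R m (fun _ => n) n (fun i => invmx (A (lift ord0 i))).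
have DW : D *m W = ones by rewrite mul_mxdiag_mxcol; apply: eq_mxcol => i; rewrite mulmxV.
have onesW : ones^T *m W = \sum_(i < m) invmx (A (lift ord0 i)).
  by rewrite tr_mxcol mul_mxrow_mxcol; apply: eq_bigr => i _; rewrite trmx1 mul1mx.
have -> : blockM A = D *m (1%:M + W *m (A ord0 *m ones^T)).
  by rewrite mulmxDr mulmx1 !mulmxA DW blockME.
rewrite det_mulmx sylvester_det det_mxdiag -mulmxA onesW.
rewrite -(mulmxV (uA ord0)) -mulmxDr det_mulmx.
by rewrite [in RHS]big_ord_recl [in RHS]big_ord_recl; ring.
Qed.

End BlockMatrix.

Lemma ln_prod (R : realType) k (f : 'I_k -> R) : (forall i, 0 < f i) ->
  ln (\prod_i f i) = \sum_i ln (f i).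
Proof.
elim: k f => [|k IH] f f0; first by rewrite !big_ord0 ln1.
rewrite !big_ord_recl lnM ?IH ?posrE ?f0 // prodr_gt0 // => i _.
Qed.

Section Fn.
Variables (R : realType) (m n : nat) (A : 'I_m.+1 -> 'M[R]_n).
Hypothesis posA : forall i, posdef (A i).

Let K : R := (m.+1)%:R.
Let B i := invmx (A i).

Let detA_gt0 i : 0 < \det (A i). Proof. exact: det_posdef_gt0. Qed.
Let detB_gt0 i : 0 < \det (B i). Proof. exact/det_posdef_gt0/posdef_inv. Qed.
Let detSB_gt0 : 0 < \det (\sum_i B i).
Proof. by apply/det_posdef_gt0/posdef_sum => i; apply: posdef_inv. Qed.
Let detM : \det (blockM A) = \prod_i \det (A i) * \det (\sum_i B i).
Proof. by rewrite det_blockM // => i; apply: posdef_unitmx. Qed.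

Lemma Fn_gt0 : 0 < Fn A.
Proof.
apply: mulr_gt0; first by apply: prodr_gt0 => i _; apply: powR_gt0.
by apply: powR_gt0; rewrite detM mulr_gt0 // prodr_gt0.
Qed.

Lemma ln_Fn_gap :
  ln (powR K (- (n%:R / 2))) - ln (Fn A) =
  (ln (\det (\sum_i B i) ^+ m.+1) - ln (K ^+ (n * m.+1) * \prod_i \det (B i)))
  / (2 * K).
Proof.
have K0 : 0 < K by rewrite ltr0n.
have prodA_gt0 : 0 < \prod_i \det (A i) by apply: prodr_gt0.
have prodB_gt0 : 0 < \prod_i \det (B i) by apply: prodr_gt0.
have powA_gt0 : 0 < \prod_i powR (\det (A i)) (m%:R / (2 * K)).
  by apply: prodr_gt0 => i _; apply: powR_gt0.
have powM_gt0 : 0 < powR (\det (blockM A)) (- (1 / 2)).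
  by apply: powR_gt0; rewrite detM mulr_gt0.
rewrite /Fn lnM ?posrE // ln_prod => [|i]; last exact: powR_gt0.
rewrite !ln_powR detM !lnM ?posrE ?exprn_gt0 //.
rewrite (ln_prod detA_gt0) (ln_prod detB_gt0) !lnXn //.
under eq_bigr do rewrite ln_powR.
have -> : \sum_i ln (\det (B i)) = - \sum_i ln (\det (A i)).
  by rewrite -sumrN; apply: eq_bigr => i _; rewrite det_inv lnV ?posrE.
rewrite -mulr_sumr -(mulr_natr (ln (\det _))) -(mulr_natr (ln K)) natrM -/K /B.
have -> : m%:R = K - 1 by rewrite /K -natr1 addrK.
move: (ln K) (\sum_i _) (ln (\det _)) => lK L s.
by field; rewrite gt_eqF.
Qed.

Let AGM_lhs_gt0 : 0 < K ^+ (n * m.+1) * \prod_i \det (B i).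
Proof. by rewrite mulr_gt0 ?exprn_gt0 ?ltr0n // prodr_gt0. Qed.

Let AGM_rhs_gt0 : 0 < \det (\sum_i B i) ^+ m.+1.
Proof. exact: exprn_gt0. Qed.

Lemma Fn_le : Fn A <= powR K (- (n%:R / 2)).
Proof.
have [AGMle _] := posdef_det_AGM (fun i => posdef_inv (posA i)).
rewrite -ler_ln ?posrE ?Fn_gt0 ?powR_gt0 ?ltr0n // -subr_ge0 ln_Fn_gap.
by rewrite divr_ge0 ?mulr_ge0 ?ler0n // subr_ge0 ler_ln ?posrE.
Qed.

Lemma Fn_eq_AGM_eq : Fn A = powR K (- (n%:R / 2)) <->
  K ^+ (n * m.+1) * \prod_i \det (B i) = \det (\sum_i B i) ^+ m.+1.
Proof.
have c_gt0 : 0 < powR K (- (n%:R / 2)) by rewrite powR_gt0 ?ltr0n.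
have K2_neq0 : 2 * K != 0 by rewrite mulf_neq0 ?pnatr_eq0.
split=> [eqFc | eqAGM].
  have := ln_Fn_gap; rewrite eqFc subrr => /esym/eqP.
  rewrite mulf_eq0 invr_eq0 (negbTE K2_neq0) orbF subr_eq0 => /eqP eq_ln.
  by apply: ln_inj; rewrite ?posrE.
apply/esym/ln_inj; rewrite ?posrE ?Fn_gt0 //; apply/eqP; rewrite -subr_eq0.
by rewrite ln_Fn_gap eqAGM subrr mul0r.
Qed.

Lemma Fn_eq : Fn A = powR K (- (n%:R / 2)) <-> forall i, A i = A ord0.
Proof.
have [_ AGMeq] := posdef_det_AGM (fun i => posdef_inv (posA i)).
rewrite Fn_eq_AGM_eq; split=> [/AGMeq eqB i | eqA].
  by rewrite -[A i]invmxK -[A ord0]invmxK eqB.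
have -> : \sum_i B i = K *: B ord0.
  rewrite (eq_bigr _ (fun i _ => congr1 invmx (eqA i))) sumr_const card_ord.
  by rewrite scaler_nat.
rewrite detZ exprMn -exprM mulnC; congr (_ * _).
rewrite (eq_bigr _ (fun i _ => congr1 (fun X => \det (invmx X)) (eqA i))).
by rewrite prodr_const card_ord.
Qed.

End Fn.

Local Open Scope classical_set_scope.

Theorem corollary5p7 (R : realType) (m n : nat) :
  let c : R := powR (m.+1)%:R (- (n%:R / 2)) in
  let S := [set Fn A | A in [set A : 'I_m.+1 -> 'M[R]_n | forall i, posdef_sym (A i)]] in
  sup S = c /\
  (forall A : 'I_m.+1 -> 'M[R]_n, (forall i, posdef_sym (A i)) -> Fn A <= c) /\
  (forall A : 'I_m.+1 -> 'M[R]_n, (forall i, posdef_sym (A i)) ->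
     (Fn A = c <-> forall i, A i = A ord0)).
Proof.
move=> c S.
have c_ub : ubound S c by move=> _ [A posA <-]; apply: Fn_le.
have c_in_S : S c.
  have pos1 : forall i : 'I_m.+1, posdef (1%:M : 'M[R]_n) := fun=> posdef1 R n.
  by exists (fun _ => 1%:M) => //; apply/(Fn_eq pos1).
split; last by split=> A posA; [apply: Fn_le | apply: Fn_eq].
apply/eqP; rewrite eq_le ge_sup //=; last by exists c.
by apply: ub_le_sup => //; exists c.
Qed.
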